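(* Let $k\ge0$ and $n\ge 2k+2$, and fix reals $t_1<\dots<t_{n+1}$. Let $C_{2k+2}(n+1)=\mathrm{conv}\{\mu_{2k+2}(t_i): i\in[n+1]\}$ and $C_{2k+1}(n+1)=\mathrm{conv}\{\mu_{2k+1}(t_i): i\in[n+1]\}$, and identify faces of both polytopes with subsets of the index set $[n+1]$ of their vertices. If $F\subseteq[n+1]$ indexes a $k$-face of $C_{2k+2}(n+1)$ but $F$ does not index a $k$-face of $C_{2k+1}(n+1)$, then every facet of $C_{2k+2}(n+1)$ containing $F$ is a lower facet.
   Context: $\mu_d(t):=(t,t^2,\dots,t^d)^T\in\mathbb R^d$ is the moment curve. A facet of a full-dimensional polytope in $\mathbb R^d$ is an upper facet if its outer normal vector has positive last coordinate, and a lower facet if its outer normal vector has negative last coordinate (for cyclic polytopes on the moment curve every facet is one of the two). *)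

From HB Require Import structures.
From mathcomp Require Import all_boot all_order all_algebra.
Set Implicit Arguments. Unset Strict Implicit. Unset Printing Implicit Defensive.
Import Order.TTheory GRing.Theory Num.Theory.
Local Open Scope ring_scope.

Definition mu (R : realFieldType) (d : nat) (t : R) : 'rV[R]_d :=
  \row_(j < d) t ^+ j.+1.

Definition dotv (R : realFieldType) (d : nat) (c x : 'rV[R]_d) : R :=
  \sum_(j < d) c 0 j * x 0 j.

(* The affine functional x |-> <c,x> <= b is valid on all points mu_d(t_i)
   (hence on the polytope conv{mu_d(t_i)}), and the vertices on which it is
   tight are exactly those indexed by F.  (c is an outer normal.) *)
Definition exposes (R : realFieldType) (d m : nat) (t : 'I_m -> R)
    (c : 'rV[R]_d) (b : R) (F : {set 'I_m}) : Prop :=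
  forall i : 'I_m,
    dotv c (mu d (t i)) <= b /\ (i \in F <-> dotv c (mu d (t i)) = b).

Definition is_face (R : realFieldType) (d m : nat) (t : 'I_m -> R)
    (F : {set 'I_m}) : Prop :=
  exists (c : 'rV[R]_d) (b : R), exposes t c b F.

(* Homogenised coordinates (1, mu_d(t_i)) of the points indexed by F
   (rows outside F are zero); its rank is (affine dimension of F) + 1. *)
Definition homog (R : realFieldType) (d m : nat) (t : 'I_m -> R)
    (F : {set 'I_m}) : 'M[R]_(m, d.+1) :=
  \matrix_(i < m, j < d.+1) (if i \in F then t i ^+ j else 0).

Definition is_kface (R : realFieldType) (d m : nat) (t : 'I_m -> R)
    (k : nat) (F : {set 'I_m}) : Prop :=
  is_face d t F /\ \rank (homog d t F) = k.+1.

Definition is_lower_facet (R : realFieldType) (d m : nat) (t : 'I_m -> R)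
    (G : {set 'I_m}) : Prop :=
  is_kface d.+1 t d G /\
  exists (c : 'rV[R]_d.+1) (b : R), exposes t c b G /\ c 0 ord_max < 0.

From HB Require Import structures.
From mathcomp Require Import all_boot all_order all_algebra.
From mathcomp Require Import zify.
Set Implicit Arguments. Unset Strict Implicit. Unset Printing Implicit Defensive.
Import Order.TTheory GRing.Theory Num.Theory.
Local Open Scope ring_scope.

(* A linear functional x |-> <c,x> - b on R^D, evaluated on
   the moment curve, is the polynomial p(x) = sum_l c_l x^(l+1) - b of degree
   at most D, whose x^D-coefficient is the last coordinate of c.  Hence F is a
   face of conv{mu_D(t_i)} exactly when some polynomial of degree <= D is
   nonpositive at every t_i and vanishes precisely at the t_i with i in F.
   With distinct t_i, the homogenised matrix of F has rank min(|F|, D+1), so a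
   k-face has k+1 vertices.  Now let G be a facet of C_(2k+2) containing F,
   exposed by p of degree <= 2k+2 with top coefficient a:
   - a = 0 is impossible: p would have degree <= 2k+1 but at least 2k+2 roots,
     so p = 0 and G would be all n+1 >= 2k+3 vertices, of rank 2k+3;
   - a > 0 is impossible: with r = prod_(i in F) (x - t_i), of degree k+1,
     the polynomial p - a r^2 has degree <= 2k+1 and exposes F, making F a
     k-face of C_(2k+1);
   so a < 0, i.e. G is a lower facet. *)

Section HomogRank.
Variables (R : realFieldType) (d m : nat) (t : 'I_m -> R).

(* homog factors through the #|F| rows indexed by F. *)
Lemma rank_homog_le_card (F : {set 'I_m}) : (\rank (homog d t F) <= #|F|)%N.
Proof.
pose Q : 'M[R]_(m, #|F|) := \matrix_(i, s) (i == enum_val s)%:R.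
pose B : 'M[R]_(#|F|, d.+1) := \matrix_(s, l) (t (enum_val s) ^+ l).
have -> : homog d t F = Q *m B.
  apply/matrixP => i l; rewrite !mxE.
  case: (boolP (i \in F)) => Fi.
    rewrite (bigD1 (enum_rank_in Fi i)) //= !mxE enum_rankK_in // eqxx mul1r.
    rewrite big1 ?addr0 // => s ns; rewrite !mxE.
    case: eqP => [i_s|]; last by rewrite mul0r.
    by move: ns; rewrite -{1}(enum_valK_in Fi s) -i_s eqxx.
  rewrite big1 // => s _; rewrite !mxE.
  case: eqP => [i_s|]; last by rewrite mul0r.
  by move: Fi; rewrite i_s enum_valP.
exact: leq_trans (mxrankM_maxl _ _) (rank_leq_col _).
Qed.

Hypothesis t_inj : injective t.

(* A square minor of homog is a Vandermonde matrix at distinct nodes. *)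
Lemma rank_homog_ge_min (F : {set 'I_m}) :
  (minn #|F| d.+1 <= \rank (homog d t F))%N.
Proof.
set p := minn #|F| d.+1.
have pF : (p <= #|F|)%N by rewrite geq_minl.
have pd : (p <= d.+1)%N by rewrite geq_minr.
pose sg : 'I_p -> 'I_m := fun s => enum_val (widen_ord pF s).
have sg_inj : injective sg.
  by move=> x y /enum_val_inj /(congr1 val) /= /val_inj.
pose X := rowsub sg (homog d t F).
have minorE : colsub (widen_ord pd) X = (Vandermonde p (\row_s t (sg s)))^T.
  by apply/matrixP => i j; rewrite !mxE /sg enum_valP.
have minor_rank : \rank (colsub (widen_ord pd) X) = p.
  rewrite minorE mxrank_tr mxrank_unit // unitmxE det_Vandermonde unitfE.
  apply/prodf_neq0 => i _; apply/prodf_neq0 => j ij.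
  rewrite subr_eq0 !mxE; apply/eqP => /t_inj /sg_inj ji.
  by move: ij; rewrite ji ltnn.
rewrite -{1}minor_rank.
have -> : colsub (widen_ord pd) X = (rowsub (widen_ord pd) X^T)^T.
  by apply/matrixP => i j; rewrite !mxE.
rewrite mxrank_tr rowsubE (leq_trans (mxrankM_maxr _ _)) // mxrank_tr /X.
by rewrite rowsubE mxrankM_maxr.
Qed.

Lemma rank_homog (F : {set 'I_m}) : \rank (homog d t F) = minn #|F| d.+1.
Proof.
apply/eqP; rewrite eqn_leq rank_homog_ge_min andbT leq_min.
by rewrite rank_homog_le_card rank_leq_col.
Qed.

Lemma card_kface (k : nat) (F : {set 'I_m}) :
  (k < d)%N -> is_kface d t k F -> #|F| = k.+1.
Proof. by move=> kd [_]; rewrite rank_homog; lia. Qed.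

Lemma kface_of_card (k : nat) (F : {set 'I_m}) :
  (k <= d)%N -> is_face d t F -> #|F| = k.+1 -> is_kface d t k F.
Proof. by move=> kd Fface cardF; split; rewrite // rank_homog cardF; lia. Qed.

End HomogRank.

Section ExposingPoly.
Variable R : realFieldType.

Definition exposing_poly (D : nat) (c : 'rV[R]_D) (b : R) : {poly R} :=
  \sum_(l < D) c 0 l *: 'X^(l.+1) - b%:P.

Lemma horner_exposing_poly D (c : 'rV[R]_D) b x :
  (exposing_poly c b).[x] = dotv c (mu D x) - b.
Proof.
rewrite /exposing_poly hornerD hornerN hornerC horner_sum /dotv.
by congr (_ - _); apply: eq_bigr => l _; rewrite hornerZ hornerXn !mxE.
Qed.

Lemma coef_exposing_poly D (c : 'rV[R]_D) b j :
  (exposing_poly c b)`_j =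
    \sum_(l < D) (if j == l.+1 then c 0 l else 0) - (if j == 0%N then b else 0).
Proof.
rewrite /exposing_poly coefB coef_sum coefC; congr (_ - _).
apply: eq_bigr => l _.
by rewrite coefZ coefXn; case: eqP; rewrite ?mulr1 ?mulr0.
Qed.

Lemma size_exposing_poly D (c : 'rV[R]_D) b :
  (size (exposing_poly c b) <= D.+1)%N.
Proof.
apply/leq_sizeP => j Dj; rewrite coef_exposing_poly.
rewrite (_ : (j == 0%N) = false) ?subr0; last by case: j Dj.
rewrite big1 // => l _; case: eqP => // jl.
by move: Dj; rewrite jl ltnS leqNgt ltn_ord.
Qed.

Lemma coef_exposing_poly_top D (c : 'rV[R]_D.+1) b :
  (exposing_poly c b)`_D.+1 = c 0 ord_max.
Proof.
rewrite coef_exposing_poly subr0 big_ord_recr /= eqxx big1 ?add0r // => l _.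
by rewrite eqSS; case: eqP => // Dl; have := ltn_ord l; rewrite -Dl ltnn.
Qed.

(* Every polynomial of degree at most D arises this way. *)
Lemma horner_exposing_coefs D (q : {poly R}) x : (size q <= D.+1)%N ->
  dotv (\row_(j < D) q`_j.+1) (mu D x) - (- q`_0) = q.[x].
Proof.
move=> qD; rewrite (horner_coef_wide x qD) big_ord_recl /= expr0 mulr1.
by rewrite opprK addrC; congr (_ + _); apply: eq_bigr => j _; rewrite !mxE.
Qed.

Lemma size_drop_top (p : {poly R}) N :
  (size p <= N.+1)%N -> p`_N = 0 -> (size p <= N)%N.
Proof.
move=> pN pN0; apply/leq_sizeP => j Nj.
have [-> // | jN] := eqVneq j N.
by move/leq_sizeP: pN; apply; rewrite ltn_neqAle eq_sym jN.
Qed.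

End ExposingPoly.

Section PolynomialFaces.
Variables (R : realFieldType) (m : nat) (t : 'I_m -> R).

Definition poly_exposes (p : {poly R}) (F : {set 'I_m}) : Prop :=
  forall i, p.[t i] <= 0 /\ (i \in F <-> p.[t i] = 0).

Lemma poly_exposes_exposing D (c : 'rV[R]_D) (b : R) (F : {set 'I_m}) :
  exposes t c b F -> poly_exposes (exposing_poly c b) F.
Proof.
move=> Fexp i; have [le_cb Fcb] := Fexp i.
rewrite horner_exposing_poly subr_le0; split=> //.
by split=> [/Fcb -> | /eqP]; [rewrite subrr | rewrite subr_eq0 => /eqP /Fcb].
Qed.

Lemma face_of_poly_exposes D (p : {poly R}) (F : {set 'I_m}) :
  (size p <= D.+1)%N -> poly_exposes p F -> is_face D t F.
Proof.
move=> pD Fexp; exists (\row_(j < D) p`_j.+1), (- p`_0) => i.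
have [le_p0 Fp0] := Fexp i.
rewrite -subr_le0 (horner_exposing_coefs _ pD); split=> //.
split=> [/Fp0 p0 | cb].
  by apply/eqP; rewrite -subr_eq0 (horner_exposing_coefs _ pD) p0.
by apply/Fp0; rewrite -(horner_exposing_coefs _ pD) cb subrr.
Qed.

Hypothesis t_inj : injective t.

(* A polynomial with at most |G| coefficients that vanishes on all of G is
   zero, so it vanishes at every node. *)
Lemma poly_exposes_small (p : {poly R}) (G : {set 'I_m}) :
  (size p <= #|G|)%N -> poly_exposes p G -> G = setT.
Proof.
move=> pG Gexp.
have p0 : p = 0.
  apply/eqP; apply: contraT => pn0.
  have := max_poly_roots pn0 (rs := map t (enum G)).
  rewrite map_inj_uniq // enum_uniq size_map -cardE.
  have -> : all (root p) (map t (enum G)).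
    by apply/allP => _ /mapP [g gG ->]; apply/eqP/(Gexp g).2; rewrite -mem_enum.
  by move=> /(_ isT isT); rewrite ltnNge pG.
by apply/setP => i; rewrite inE; apply/(Gexp i).2; rewrite p0 horner0.
Qed.

Definition vanishing_poly (F : {set 'I_m}) : {poly R} :=
  \prod_(x <- map t (enum F)) ('X - x%:P).

Lemma vanishing_poly_monic F : vanishing_poly F \is monic.
Proof. exact: monic_prod_XsubC. Qed.

Lemma size_vanishing_poly F : size (vanishing_poly F) = #|F|.+1.
Proof. by rewrite size_prod_XsubC size_map -cardE. Qed.

Lemma root_vanishing_poly F i : root (vanishing_poly F) (t i) = (i \in F).
Proof. by rewrite root_prod_XsubC mem_map // mem_enum. Qed.

Lemma size_vanishing_poly_sqr F :
  size (vanishing_poly F ^+ 2) = (#|F|.*2).+1.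
Proof.
rewrite expr2 size_monicM ?monic_neq0 ?vanishing_poly_monic //.
by rewrite size_vanishing_poly /=; lia.
Qed.

Lemma coef_vanishing_poly_sqr_top F : (vanishing_poly F ^+ 2)`_(#|F|.*2) = 1.
Proof.
have /monicP <- := vanishing_poly_monic F.
rewrite expr2 -(lead_coef_monicM _ (vanishing_poly_monic F)) /lead_coef.
by rewrite -expr2 size_vanishing_poly_sqr.
Qed.

Lemma poly_exposes_sub_sqr (p : {poly R}) (F G : {set 'I_m}) (a : R) :
  poly_exposes p G -> F \subset G -> 0 < a ->
  poly_exposes (p - a *: vanishing_poly F ^+ 2) F.
Proof.
move=> Gexp FG a_gt0 i; have [le_p0 Gp0] := Gexp i.
set y := vanishing_poly F ^+ 2; have y_ge0 : 0 <= a * y.[t i].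
  by apply: mulr_ge0; [exact: ltW | rewrite /y horner_exp sqr_ge0].
rewrite hornerD hornerN hornerZ.
split; first by rewrite subr_le0 (le_trans le_p0).
split=> [Fi | /eqP].
  have /eqP r0 : root (vanishing_poly F) (t i) by rewrite root_vanishing_poly.
  rewrite /y horner_exp r0 expr0n mulr0 subr0.
  by apply/Gp0; move/subsetP: FG; apply.
rewrite subr_eq0 => /eqP py.
have : a * y.[t i] == 0 by rewrite eq_le y_ge0 -py le_p0.
by rewrite mulf_eq0 gt_eqF //= /y horner_exp expf_eq0 /= -root_vanishing_poly.
Qed.

End PolynomialFaces.

Section FacetNormal.
Variables (R : realFieldType) (m : nat) (t : 'I_m -> R).
Hypothesis t_inj : injective t.

Lemma vertical_facet_absurd D (c : 'rV[R]_D.+1) (b : R) (G : {set 'I_m}) :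
  (D.+2 <= m)%N -> exposes t c b G -> \rank (homog D.+1 t G) = D.+1 ->
  c 0 ord_max != 0.
Proof.
move=> Dm Gexp rkG; apply/negP => /eqP c0.
have pD : (size (exposing_poly c b) <= D.+1)%N.
  by rewrite size_drop_top ?size_exposing_poly ?coef_exposing_poly_top.
have cardG : (D.+1 <= #|G|)%N by rewrite -rkG rank_homog_le_card.
move: rkG; rewrite (poly_exposes_small t_inj (leq_trans pD cardG)).
  by rewrite rank_homog // cardsT card_ord; lia.
exact: poly_exposes_exposing.
Qed.

Lemma face_below_upper_facet D (c : 'rV[R]_D.+1) (b : R) (F G : {set 'I_m}) :
  D.+1 = #|F|.*2 -> exposes t c b G -> F \subset G -> 0 < c 0 ord_max ->
  is_face D t F.
Proof.
move=> DF Gexp FG c_gt0.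
have sqr_top : (vanishing_poly t F ^+ 2)`_D.+1 = 1.
  by rewrite DF coef_vanishing_poly_sqr_top.
set q := exposing_poly c b - c 0 ord_max *: vanishing_poly t F ^+ 2.
apply: (@face_of_poly_exposes _ _ _ _ q); last first.
  exact: poly_exposes_sub_sqr (poly_exposes_exposing Gexp) FG c_gt0.
apply: size_drop_top; last first.
  by rewrite coefB coefZ sqr_top mulr1 coef_exposing_poly_top subrr.
rewrite (leq_trans (size_polyD _ _)) // geq_max size_exposing_poly size_polyN.
by rewrite (leq_trans (size_scale_leq _ _)) // size_vanishing_poly_sqr DF.
Qed.

End FacetNormal.

Theorem lemma2p4 (R : realFieldType) (k n : nat) (t : 'I_n.+1 -> R) :
  (2 * k + 2 <= n)%N ->
  (forall i j : 'I_n.+1, (i < j)%N -> t i < t j) ->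
  forall F : {set 'I_n.+1},
    is_kface (2 * k + 2) t k F ->
    ~ is_kface (2 * k + 1) t k F ->
    forall G : {set 'I_n.+1},
      is_kface (2 * k + 2) t (2 * k + 1) G ->
      F \subset G ->
      is_lower_facet (2 * k + 1) t G.
Proof.
have -> : (2 * k + 2 = k.*2.+2)%N by rewrite mul2n addn2.
have -> : (2 * k + 1 = k.*2.+1)%N by rewrite mul2n addn1.
move=> kn t_mono F Fkface FnotKface G Gfacet FG.
have t_inj : injective t.
  by move=> i j tij; apply/val_inj/eqP; case: ltngtP => // /t_mono;
    rewrite tij ltxx.
have cardF : #|F| = k.+1.
  by apply: (card_kface t_inj _ Fkface); rewrite -addnn; lia.
have [[c [b Gexp]] rkG] := Gfacet.
split=> //; exists c, b; split=> //.
case: (ltrgtP (c 0 ord_max) 0) => // [c_gt0 | c0].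
- case: FnotKface; apply: (kface_of_card t_inj _ _ cardF).
    by rewrite -addnn; lia.
  by apply: (face_below_upper_facet t_inj _ Gexp FG c_gt0); rewrite cardF.
- have := vertical_facet_absurd t_inj (kn : (k.*2.+2 < n.+1)%N) Gexp rkG.
  by rewrite c0 eqxx.
Qed.
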